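(* Let $E$ be an arbitrary directed graph, $K$ a field, and $H\subseteq E^0$ hereditary and saturated. Put $H^\bot=E^0-R(H)$. If $v$ is a vertex with $v\in B_{H^\bot}$, then $v^{H^\bot}=v-\sum ee^*\in L_K(E)$, where the sum runs over the elements $e$ of the nonempty finite set $\mathbf{s}^{-1}(v)\cap\mathbf{r}^{-1}(R(H))$. Moreover $v\in R(H)-H$.
   Context: Graph $E$ with vertices $E^0$, edges $E^1$, source/range maps $\mathbf{s},\mathbf{r}$. A path is a vertex or a finite sequence of edges $e_1\dots e_n$ with $\mathbf{r}(e_i)=\mathbf{s}(e_{i+1})$. For $u,v\in E^0$ write $u\ge v$ if there is a path from $u$ to $v$ (a vertex is a path from itself to itself). For $V\subseteq E^0$, $R(V)=\{u\in E^0\mid u\ge v\text{ for some }v\in V\}$. $H$ is hereditary if $\mathbf{r}(p)\in H$ whenever $p$ is a path with $\mathbf{s}(p)\in H$; saturated if every regular vertex $v$ (emitting a nonzero finite number of edges) with $\mathbf{r}(\mathbf{s}^{-1}(v))\subseteq H$ lies in $H$. For hereditary saturated $G$, $B_G=\{v\in E^0-G\mid v$ emits infinitely many edges and $\mathbf{s}^{-1}(v)\cap\mathbf{r}^{-1}(E^0-G)$ is nonempty and finite$\}$, and for $v\in B_G$, $v^G=v-\sum_{e\in\mathbf{s}^{-1}(v)\cap\mathbf{r}^{-1}(E^0-G)}ee^*\in L_K(E)$ (Leavitt path algebra of $E$ over $K$). $E^0-R(H)$ is hereditary and saturated. *)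

From HB Require Import structures.
From mathcomp Require Import all_boot all_order all_algebra.
From mathcomp Require Import boolp classical_sets cardinality fsbigop.
Set Implicit Arguments. Unset Strict Implicit. Unset Printing Implicit Defensive.
Import GRing.Theory.
Local Open Scope classical_set_scope.
Local Open Scope ring_scope.

(* A directed graph E = (E^0, E^1, s, r): vertices V, edges Ed.
   V and Ed are choiceTypes (classically every type admits such a structure). *)
Record graph := Graph {
  vert : choiceType;
  edge : choiceType;
  src : edge -> vert;
  rng : edge -> vert }.

Inductive path_from_to (E : graph) : vert E -> vert E -> Prop :=
| path_vertex u : path_from_to u u
| path_cons (e : edge E) w : path_from_to (rng e) w -> path_from_to (src e) w.

Definition Rset (E : graph) (X : set (vert E)) : set (vert E) :=
  [set u | exists2 v, X v & path_from_to u v].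

Definition emits (E : graph) (v : vert E) : set (edge E) := [set e | src e = v].

Definition regular (E : graph) (v : vert E) : Prop :=
  finite_set (emits v) /\ emits v !=set0.

Definition hereditary (E : graph) (H : set (vert E)) : Prop :=
  forall u w, path_from_to u w -> H u -> H w.

Definition saturated (E : graph) (H : set (vert E)) : Prop :=
  forall v, regular v -> (forall e, src e = v -> H (rng e)) -> H v.

Definition Bset (E : graph) (G : set (vert E)) : set (vert E) :=
  [set v | ~ G v /\ infinite_set (emits v) /\
     [set e | src e = v /\ ~ G (rng e)] !=set0 /\
     finite_set [set e | src e = v /\ ~ G (rng e)]].

(* A Leavitt E-family in a K-algebra A (relations of L_K(E)). *)
Record leavitt_family (E : graph) (K : fieldType) (A : algType K) := LFam {
  lv : vert E -> A;
  le : edge E -> A;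
  les : edge E -> A;  (* ghost edges e^* *)
}.

Definition is_leavitt_family (E : graph) (K : fieldType) (A : algType K)
  (F : leavitt_family E A) : Prop :=
  [/\ (forall v w, lv F v * lv F w = if v == w then lv F v else 0),
      (forall e, lv F (src e) * le F e = le F e /\ le F e * lv F (rng e) = le F e),
      (forall e, lv F (rng e) * les F e = les F e /\ les F e * lv F (src e) = les F e),
      (forall e f, les F e * le F f = if e == f then lv F (rng e) else 0) &
      (forall v, regular v ->
         lv F v = \sum_(e \in emits v) (le F e * les F e))].

Definition vG (E : graph) (K : fieldType) (A : algType K)
  (F : leavitt_family E A) (G : set (vert E)) (v : vert E) : A :=
  lv F v - \sum_(e \in [set e | src e = v /\ ~ G (rng e)]) (le F e * les F e).

From HB Require Import structures.
From mathcomp Require Import all_boot all_order all_algebra.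
From mathcomp Require Import boolp classical_sets cardinality fsbigop.
Set Implicit Arguments. Unset Strict Implicit. Unset Printing Implicit Defensive.
Local Open Scope classical_set_scope.
Local Open Scope ring_scope.

(* Since the complement of H^bot = E^0 - R(H) is R(H), the edges of v whose
   range lies outside H^bot are exactly those whose range lies in R(H), and v,
   not being in H^bot, lies in R(H).  It is not in H: H being hereditary, all
   of the infinitely many edges emitted by v would otherwise end in R(H),
   contradicting the finiteness of that set of edges. *)

Section Graph.
Variable E : graph.

Lemma sub_Rset (X : set (vert E)) : X `<=` Rset X.
Proof. by move=> u Xu; exists u => //; apply: path_vertex. Qed.

Lemma out_edges_setCC (X : set (vert E)) (v : vert E) :
  [set e | src e = v /\ ~ (~` X) (rng e)] = [set e | src e = v /\ X (rng e)].
Proof. by rewrite -[in RHS](setCK X). Qed.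

Lemma hereditary_emits_sub (H : set (vert E)) (v : vert E) :
  hereditary H -> H v -> emits v `<=` [set e | src e = v /\ H (rng e)].
Proof.
move=> Hher Hv e ev; split => //.
by apply: (Hher v) Hv; rewrite -ev; apply: path_cons (path_vertex _).
Qed.

Lemma Bset_setC (X : set (vert E)) (v : vert E) :
  let S := [set e | src e = v /\ X (rng e)] in
  Bset (~` X) v -> [/\ X v, infinite_set (emits v), S !=set0 & finite_set S].
Proof.
move=> S [nXv [inf_v [S0 finS]]].
by rewrite out_edges_setCC in S0 finS; split => //; apply: contrapT.
Qed.

Lemma Bset_setC_Rset_notin (H : set (vert E)) (v : vert E) :
  hereditary H -> Bset (~` Rset H) v -> ~ H v.
Proof.
move=> Hher /Bset_setC[_ inf_v _ finS] Hv; apply: inf_v.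
apply: sub_finite_set finS => e /(hereditary_emits_sub Hher Hv)[ev He].
by split => //; apply: sub_Rset.
Qed.

End Graph.

Theorem lemma3p4 (E : graph) (K : fieldType) (A : algType K)
  (F : leavitt_family E A) (HF : is_leavitt_family F)
  (H : set (vert E)) (Hher : hereditary H) (Hsat : saturated H)
  (v : vert E) (hv : Bset (~` Rset H) v) :
  let S := [set e | src e = v /\ Rset H (rng e)] in
  [/\ S !=set0, finite_set S,
      vG F (~` Rset H) v = lv F v - \sum_(e \in S) (le F e * les F e) &
      (Rset H `\` H) v].
Proof.
move=> S; have [RHv _ S0 finS] := Bset_setC hv.
split => //; first by rewrite /vG out_edges_setCC.
by split => //; apply: Bset_setC_Rset_notin hv.
Qed.
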